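(* Let $f\in\mathbb{F}_2((T^{-1}))$ be the unique solution with $|f|<1$ of the equation $$X^4+X+\frac{T}{T^4+1}=0.$$ Then $\mu(f)=3$.
   Context: Fix a real $|T|>1$; the absolute value on $\mathbb{F}_2((T^{-1}))$ is $|g|=|T|^{-i_0}$ where $T^{-i_0}$ is the leading term of $g\ne0$, so $|P/Q|=|T|^{\deg P-\deg Q}$. (The equation has exactly one solution in $\{|g|<1\}$.) The irrationality exponent $\mu(f)$ is the supremum of real $\tau$ such that $|f-P/Q|<|Q|^{-\tau}$ has infinitely many solutions $(P,Q)\in\mathbb{F}_2[T]^2$, $Q\ne0$. *)

From HB Require Import structures.
From mathcomp Require Import all_boot all_order all_algebra.
From mathcomp Require Import all_classical all_reals all_analysis.
From mathcomp Require Import zify.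
Set Implicit Arguments. Unset Strict Implicit. Unset Printing Implicit Defensive.
Import Order.TTheory GRing.Theory Num.Theory.
Local Open Scope ring_scope.

(* Laurent series in F_2((T^{-1})): coefficient of T^i for i : int,
   with an explicit upper bound beyond which all coefficients vanish. *)
Record laurent := Laurent {
  lcoef : int -> 'F_2 ;
  lbnd : int ;
  lbndP : forall i : int, lbnd < i -> lcoef i = 0 }.

Definition ls_eq (a b : laurent) : Prop := forall i, lcoef a i = lcoef b i.

Lemma ls_add_bnd (a b : laurent) :
  forall i : int, Num.max (lbnd a) (lbnd b) < i -> lcoef a i + lcoef b i = 0.
Proof.
move=> i; rewrite gt_max => /andP[ha hb].
by rewrite (lbndP ha) (lbndP hb) addr0.
Qed.
Definition ls_add (a b : laurent) : laurent :=
  Laurent (@ls_add_bnd a b).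

Lemma ls_sub_bnd (a b : laurent) :
  forall i : int, Num.max (lbnd a) (lbnd b) < i -> lcoef a i - lcoef b i = 0.
Proof.
move=> i; rewrite gt_max => /andP[ha hb].
by rewrite (lbndP ha) (lbndP hb) subr0.
Qed.
Definition ls_sub (a b : laurent) : laurent :=
  Laurent (@ls_sub_bnd a b).

(* Cauchy product: coefficient of T^n is sum_{i+j=n} a_i b_j, where only
   i in [n - lbnd b, lbnd a] can contribute. *)
Definition ls_mul_coef (a b : laurent) (n : int) : 'F_2 :=
  \sum_(k < (absz (lbnd a + lbnd b - n)%R).+1)
     lcoef a (lbnd a - k%:Z) * lcoef b (n - lbnd a + k%:Z).

Lemma ls_mul_bnd (a b : laurent) :
  forall n : int, lbnd a + lbnd b < n -> ls_mul_coef a b n = 0.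
Proof.
move=> n hn; apply: big1 => k _.
have hb : lbnd b < n - lbnd a + k%:Z by lia.
by rewrite (lbndP hb) mulr0.
Qed.
Definition ls_mul (a b : laurent) : laurent :=
  Laurent (@ls_mul_bnd a b).

Lemma ls_of_poly_bnd (p : {poly 'F_2}) :
  forall i : int, (size p)%:Z < i ->
    (if (0 <= i) then p`_(absz i) else 0) = 0.
Proof.
move=> i hi; case: ifP => // hi0; apply: nth_default.
case: i hi hi0 => // m hi _; rewrite ltz_nat in hi; exact: ltnW.
Qed.
Definition ls_of_poly (p : {poly 'F_2}) : laurent :=
  Laurent (@ls_of_poly_bnd p).

Definition ls_zero : laurent := ls_of_poly 0.

(* absolute value |g| = c^(i0) where T^(i0) is the leading term of g != 0,
   and |0| = 0; written as the max (= sup) of c^i over the support. *)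
Definition ls_abs (R : realType) (c : R) (g : laurent) : R :=
  sup [set c ^ i | i in [set i : int | lcoef g i != 0]].

Definition ls_is_quot (g : laurent) (P Q : {poly 'F_2}) : Prop :=
  ls_eq (ls_mul (ls_of_poly Q) g) (ls_of_poly P).

Definition approx_set (R : realType) (c : R) (f : laurent) (tau : R)
  : set ({poly 'F_2} * {poly 'F_2}) :=
  [set PQ | PQ.2 != 0 /\
     exists g, ls_is_quot g PQ.1 PQ.2 /\
       ls_abs c (ls_sub f g) < powR (ls_abs c (ls_of_poly PQ.2)) (- tau)].

Definition irr_exponent (R : realType) (c : R) (f : laurent) : \bar R :=
  ereal_sup [set tau%:E | tau in [set tau : R | infinite_set (approx_set c f tau)]].

Definition solves_eq (f : laurent) : Prop :=
  exists h : laurent,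
    ls_is_quot h 'X ('X^4 + 1) /\
    ls_eq (ls_add (ls_add (ls_mul f (ls_mul f (ls_mul f f))) f) h) ls_zero.

(** As squaring is additive in characteristic 2, the equation
    is the recurrence f_i = [4 | i] f_(i/4) + [i < 0, i = 1 mod 4], with f_i = 0 for i >= 0.
    It forces f to agree above degree -3.4^n, but not in degree -3.4^n, with the
    4^n-periodic series g_n = P_n / (T^(4^n) + 1) repeating its last 4^n coefficients;
    hence |f - g_n| = |T^(4^n) + 1|^(-3) and mu(f) >= 3.
    Conversely let P/Q approximate f, q = deg Q >= 2, and choose n with 4^n <= 2q < 2.4^(n+1).
    If P/Q = g_n then (T + 1)^(4^n) = T^(4^n) + 1 divides Q because P_n(1) = 1, so q >= 4^n
    and |f - P/Q| = |T|^(-3.4^n) >= |Q|^(-3).  Otherwise Q (T^(4^n) + 1) (P/Q - g_n) is a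
    nonzero polynomial, so P/Q - g_n has a term of degree >= -(q + 4^n) > -3.4^n, where f
    and g_n agree, and again |f - P/Q| >= |Q|^(-3).  So the approximations of exponent
    tau > 3 have deg Q <= 1, and there are finitely many of them. *)
From HB Require Import structures.
From mathcomp Require Import all_boot all_order all_algebra.
From mathcomp Require Import all_classical all_reals all_analysis.
From mathcomp Require Import zify ring lra.
Set Implicit Arguments. Unset Strict Implicit. Unset Printing Implicit Defensive.
Import Order.TTheory GRing.Theory Num.Theory.
Local Open Scope ring_scope.

Lemma pchar_F2 : 2%N \in [pchar 'F_2]. Proof. exact: pchar_Fp. Qed.

Lemma F2_addrr (x : 'F_2) : x + x = 0. Proof. by rewrite addrr_pchar2 // pchar_F2. Qed.

Lemma F2_oppr (x : 'F_2) : - x = x. Proof. by rewrite oppr_pchar2 // pchar_F2. Qed.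

Lemma F2_mulrr (x : 'F_2) : x * x = x.
Proof. by case: x => [[|[|[]]]] //= ?; apply/val_inj. Qed.

Lemma F2_neq0 (x : 'F_2) : x != 0 -> x = 1.
Proof. by case: x => [[|[|[]]]] //= ? _; apply/val_inj. Qed.

Definition zsum (lo : int) (N : nat) (F : int -> 'F_2) : 'F_2 :=
  \sum_(k < N) F (lo + k%:Z).

Lemma zsumD lo N F G : zsum lo N (fun i => F i + G i) = zsum lo N F + zsum lo N G.
Proof. by rewrite /zsum big_split. Qed.

Lemma zsumMl lo N a F : zsum lo N (fun i => a * F i) = a * zsum lo N F.
Proof. by rewrite /zsum mulr_sumr. Qed.

Lemma eq_zsum lo N F G : (forall i, lo <= i -> i < lo + N%:Z -> F i = G i) ->
  zsum lo N F = zsum lo N G.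
Proof. by move=> eFG; apply: eq_bigr => k _; apply: eFG; have := ltn_ord k; lia. Qed.

Lemma zsum1 lo N F : (forall i, lo <= i -> i < lo + N%:Z -> F i = 0) -> zsum lo N F = 0.
Proof. by move=> F0; apply: big1 => k _; apply: F0; have := ltn_ord k; lia. Qed.

Lemma zsum_widen lo1 N1 lo2 N2 F :
  lo2 <= lo1 -> lo1 + N1%:Z <= lo2 + N2%:Z ->
  (forall i, i < lo1 \/ lo1 + N1%:Z <= i -> F i = 0) ->
  zsum lo2 N2 F = zsum lo1 N1 F.
Proof.
move=> le_lo le_hi F0; rewrite /zsum.
set d := absz (lo1 - lo2); have lo1E : lo1 = lo2 + d%:Z by lia.
rewrite -(big_mkord xpredT (fun k => F (lo2 + k%:Z))).
rewrite -(big_mkord xpredT (fun k => F (lo1 + k%:Z))).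
rewrite (@big_cat_nat _ _ _ d 0 N2) ?(@big_cat_nat _ _ _ (d + N1)%N d N2) //=; try lia.
have low0 : \sum_(0 <= i < d) F (lo2 + i%:Z) = 0.
  by rewrite big_nat_cond big1 // => k /andP[/andP[_ ?] _]; apply: F0; lia.
have high0 : \sum_(d + N1 <= i < N2) F (lo2 + i%:Z) = 0.
  by rewrite big_nat_cond big1 // => k /andP[/andP[? _] _]; apply: F0; lia.
rewrite low0 high0 add0r addr0.
rewrite -{1}(add0n d) big_addn addnC addnK.
by apply: eq_bigr => k _; congr F; lia.
Qed.

Lemma zsum_delta lo N x (F : int -> 'F_2) :
  zsum lo N (fun j => (j == x)%:R * F j) =
  if (lo <= x) && (x < lo + N%:Z) then F x else 0.
Proof.
rewrite /zsum; case: ifP => [/andP[lox xhi]|xout].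
  have xN : (absz (x - lo) < N)%N by lia.
  rewrite (bigD1 (Ordinal xN)) //= big1 ?addr0 => [|k neqk].
    have -> : lo + (absz (x - lo))%:Z = x by lia.
    by rewrite eqxx mul1r.
  suff /negbTE -> : lo + k%:Z != x by rewrite mul0r.
  by apply: contra neqk => /eqP xE; apply/eqP/val_inj => /=; lia.
apply: big1 => k _; suff /negbTE -> : lo + k%:Z != x by rewrite mul0r.
by apply/eqP => xE; move: xout; have := ltn_ord k; rewrite -xE; lia.
Qed.

(* In characteristic 2 the off-diagonal terms of a symmetric double sum cancel in pairs. *)
Lemma zsum_sym lo N (F : int -> int -> 'F_2) : (forall i j, F i j = F j i) ->
  zsum lo N (fun i => zsum lo N (F i)) = zsum lo N (fun i => F i i).
Proof.
move=> Fsym; rewrite /zsum; elim: N => [|N IH]; first by rewrite !big_ord0.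
rewrite !big_ord_recr /= -IH.
under eq_bigr do rewrite big_ord_recr /=.
rewrite big_split /=.
under [\sum_(i < N) F _ (lo + N%:Z)]eq_bigr do rewrite Fsym.
by rewrite -!addrA [X in _ + X]addrA F2_addrr add0r.
Qed.

(** * Coefficients of products of Laurent series *)

Definition pcoef (p : {poly 'F_2}) (i : int) : 'F_2 := if 0 <= i then p`_(absz i) else 0.

Lemma lcoef_poly (p : {poly 'F_2}) i : lcoef (ls_of_poly p) i = pcoef p i.
Proof. by []. Qed.

Lemma lcoef_add (a b : laurent) i : lcoef (ls_add a b) i = lcoef a i + lcoef b i.
Proof. by []. Qed.

Lemma pcoef_nat (p : {poly 'F_2}) (k : nat) : pcoef p k%:Z = p`_k.
Proof. by []. Qed.

Lemma pcoef_size (p : {poly 'F_2}) i : (size p)%:Z <= i -> pcoef p i = 0.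
Proof.
rewrite /pcoef; case: (lerP 0 i) => // i0 le_si.
by apply: nth_default; have : (size p <= absz i)%N by lia.
Qed.

Lemma pcoef_neg (p : {poly 'F_2}) i : i < 0 -> pcoef p i = 0.
Proof. by rewrite /pcoef; case: (lerP 0 i) => //; lia. Qed.

Lemma lcoef_mul (a b : laurent) n lo N :
  lo <= n - lbnd b -> lbnd a < lo + N%:Z ->
  lcoef (ls_mul a b) n = zsum lo N (fun i => lcoef a i * lcoef b (n - i)).
Proof.
move=> le_lo lt_hi /=; case: (ltrP (lbnd a + lbnd b) n) => bnd_n.
  rewrite ls_mul_bnd // zsum1 // => i _ _.
  case: (lerP i (lbnd a)) => bnd_i; last by rewrite lbndP ?mul0r.
  by rewrite (@lbndP b) ?mulr0 //; lia.
rewrite /ls_mul_coef; set K := absz (lbnd a + lbnd b - n)%R.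
rewrite (@zsum_widen (n - lbnd b) K.+1) //; first last.
- move=> i [i_lo|i_hi]; first by rewrite (@lbndP b) ?mulr0 //; lia.
  by rewrite lbndP ?mul0r //; rewrite /K in i_hi; lia.
- by rewrite /K; lia.
rewrite /zsum (reindex_inj rev_ord_inj) /=.
apply: eq_bigr => k _; have := ltn_ord k; rewrite /K subSS => ltkK.
by congr (lcoef a _ * lcoef b _); lia.
Qed.

Lemma lcoef_polyM (p : {poly 'F_2}) (g : laurent) n :
  lcoef (ls_mul (ls_of_poly p) g) n = zsum 0 (size p) (fun j => pcoef p j * lcoef g (n - j)).
Proof.
set lo := - (`|n| + `|lbnd g|).
rewrite (@lcoef_mul _ _ _ lo (absz ((size p)%:Z - lo + 1))); try by rewrite /=; lia.
apply: zsum_widen; rewrite /lo; try lia.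
move=> i [i_lo|i_hi]; rewrite lcoef_poly; first by rewrite pcoef_neg ?mul0r.
by rewrite pcoef_size ?mul0r //; lia.
Qed.

Lemma lcoef_sqr (f : laurent) n lo N :
  lo <= n - lbnd f -> lbnd f < lo + N%:Z ->
  lcoef (ls_mul f f) n = zsum lo N (fun i => (i + i == n)%:R * lcoef f i).
Proof.
move=> le_lo lt_hi; rewrite (lcoef_mul le_lo lt_hi).
rewrite (@eq_zsum _ _ _ (fun i => zsum lo N (fun j => (i + j == n)%:R * (lcoef f i * lcoef f j)))).
  rewrite zsum_sym => [|i j]; last by rewrite [i + j]addrC [lcoef f i * _]mulrC.
  by apply: eq_zsum => i _ _; rewrite F2_mulrr.
move=> i lo_i i_hi; rewrite (@eq_zsum _ _ _ (fun j => lcoef f i * ((j == n - i)%:R * lcoef f j))).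
  rewrite zsumMl zsum_delta; case: ifP => // /negbT; rewrite negb_and -ltNge -leNgt.
  case: (lerP (n - i) (lbnd f)) => bnd; last by rewrite (@lbndP f (n - i)) ?mulr0.
  by move=> out; rewrite (@lbndP f i) ?mul0r //; lia.
by move=> j _ _; rewrite mulrCA; congr (_ * (_%:R * _)); apply/eqP/eqP; lia.
Qed.

Lemma lcoef_sqr_even (f : laurent) m : lcoef (ls_mul f f) (m + m) = lcoef f m.
Proof.
set lo := - (2 * `|m| + `|lbnd f| + 1).
rewrite (@lcoef_sqr _ _ lo (absz (lbnd f - lo + 1))) /lo; try lia.
rewrite (@eq_zsum _ _ _ (fun i => (i == m)%:R * lcoef f i)).
  by rewrite zsum_delta; case: ifP => // /negbT out; rewrite lbndP //; lia.
by move=> i _ _; congr (_%:R * _); apply/eqP/eqP; lia.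
Qed.

Lemma lcoef_sqr_odd (f : laurent) m : lcoef (ls_mul f f) (m + m + 1) = 0.
Proof.
set lo := - (2 * `|m| + `|lbnd f| + 1).
rewrite (@lcoef_sqr _ _ lo (absz (lbnd f - lo + 1))) /lo; try lia.
apply: zsum1 => i _ _; have /negbTE -> : i + i != m + m + 1 by lia.
by rewrite mul0r.
Qed.

Lemma lcoef_sqr_mul (a b : laurent) n lo N :
  lo <= n - lbnd a - lbnd b -> lbnd a < lo + N%:Z ->
  lcoef (ls_mul a (ls_mul a b)) n = zsum lo N (fun i => lcoef a i * lcoef b (n - i - i)).
Proof.
move=> le_lo lt_hi; rewrite (@lcoef_mul _ _ _ lo N); try by rewrite /=; lia.
rewrite (@eq_zsum _ _ _ (fun i => zsum lo N (fun j => lcoef a i * lcoef a j * lcoef b (n - i - j)))).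
  rewrite zsum_sym => [|i j]; first by apply: eq_zsum => i _ _; rewrite F2_mulrr.
  by rewrite (mulrC (lcoef a i)); congr (_ * lcoef _ _); lia.
move=> i _ _; case: (lerP i (lbnd a)) => bnd_i.
  rewrite (@lcoef_mul _ _ _ lo N) -?zsumMl; try lia.
  by apply: eq_zsum => j _ _; rewrite mulrA.
by rewrite (@lbndP a i) // mul0r zsum1 // => j _ _; rewrite !mul0r.
Qed.

Notation ls_pow4 f := (ls_mul f (ls_mul f (ls_mul f f))).

Lemma lcoef_pow4_even (f : laurent) m :
  lcoef (ls_pow4 f) (m + m) = lcoef (ls_mul f f) m.
Proof.
set lo := - (2 * `|m| + 4 * `|lbnd f| + 1); set N := absz (lbnd f - lo + 1).
rewrite (@lcoef_sqr_mul _ _ _ lo N) ?(@lcoef_mul _ _ _ lo N); try by rewrite /lo /N /=; lia.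
by apply: eq_zsum => i _ _; rewrite (_ : m + m - i - i = (m - i) + (m - i)) ?lcoef_sqr_even //; ring.
Qed.

Lemma lcoef_pow4_odd (f : laurent) m : lcoef (ls_pow4 f) (m + m + 1) = 0.
Proof.
set lo := - (2 * `|m| + 4 * `|lbnd f| + 1).
rewrite (@lcoef_sqr_mul _ _ _ lo (absz (lbnd f - lo + 1))); try by rewrite /lo /=; lia.
apply: zsum1 => i _ _.
by rewrite (_ : m + m + 1 - i - i = (m - i) + (m - i) + 1) ?lcoef_sqr_odd ?mulr0 //; ring.
Qed.

Lemma lcoef_pow4 (f : laurent) k r : 0 <= r < 4 ->
  lcoef (ls_pow4 f) (4 * k + r) = if r == 0 then lcoef f k else 0.
Proof.
move=> r_range; have [->|[->|[->|->]]] : r = 0 \/ r = 1 \/ r = 2 \/ r = 3 by lia.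
- by rewrite (_ : _ + 0 = (k + k) + (k + k)) ?lcoef_pow4_even ?lcoef_sqr_even //; ring.
- by rewrite (_ : _ + 1 = (k + k) + (k + k) + 1) ?lcoef_pow4_odd //; ring.
- by rewrite (_ : _ + 2 = (k + k + 1) + (k + k + 1)) ?lcoef_pow4_even ?lcoef_sqr_odd //; ring.
- by rewrite (_ : _ + 3 = (k + k + 1) + (k + k + 1) + 1) ?lcoef_pow4_odd //; ring.
Qed.

(** * The coefficient recurrence of f *)

Definition XnD1 (N : nat) : {poly 'F_2} := 'X^N + 1.

Lemma size_XnD1 N : (0 < N)%N -> size (XnD1 N) = N.+1.
Proof. by move=> N_gt0; rewrite /XnD1 -polyC1 size_XnaddC. Qed.

Lemma XnD1_neq0 N : (0 < N)%N -> XnD1 N != 0.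
Proof. by move=> N_gt0; rewrite -size_poly_eq0 size_XnD1. Qed.

Lemma zsum_XnD1 N (F : int -> 'F_2) k : (0 < N)%N ->
  zsum 0 (size (XnD1 N)) (fun j => pcoef (XnD1 N) j * F (k - j)) = F k + F (k - N%:Z).
Proof.
move=> N_gt0; rewrite size_XnD1 //.
rewrite (@eq_zsum _ _ _ (fun j => (j == 0)%:R * F (k - j) + (j == N%:Z)%:R * F (k - j))).
  by rewrite zsumD !zsum_delta !ifT ?subr0 //; lia.
move=> j j_ge0 _; rewrite /pcoef j_ge0 coefD coefXn coef1 addrC mulrDl.
by congr (_%:R * _ + _%:R * _); apply/eqP/eqP; lia.
Qed.

Lemma lcoef_XnD1M N (g : laurent) n : (0 < N)%N ->
  lcoef (ls_mul (ls_of_poly (XnD1 N)) g) n = lcoef g n + lcoef g (n - N%:Z).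
Proof. by move=> N_gt0; rewrite lcoef_polyM zsum_XnD1. Qed.

Lemma recurrence_unique (V : zmodType) (x y e : int -> V) (d : nat) (B : int) :
  (0 < d)%N -> (forall i, B < i -> x i = 0) -> (forall i, B < i -> y i = 0) ->
  (forall n, x n + x (n - d%:Z) = e n) -> (forall n, y n + y (n - d%:Z) = e n) ->
  forall i, x i = y i.
Proof.
move=> d_gt0 x0 y0 xe ye.
have down z : (forall n, z n + z (n - d%:Z) = e n) -> forall i, z i = e (i + d%:Z) - z (i + d%:Z).
  move=> ze i; rewrite -ze (_ : i + d%:Z - d%:Z = i); last by ring.
  by rewrite [RHS]addrC addKr.
suff xy k : forall i, B - (k * d)%:Z < i -> x i = y i.
  by move=> i; apply: (xy (absz (B - i)).+1); have := leq_pmulr (absz (B - i)).+1 d_gt0; lia.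
elim: k => [|k IH] i lt_i; first by rewrite x0 ?y0 //; lia.
by rewrite (down x xe) (down y ye) IH //; lia.
Qed.

(* The coefficients of T / (T^4 + 1) = T^-3 + T^-7 + T^-11 + ... *)
Definition quot_coef (n : int) : 'F_2 := ((n < 0) && ((n %% 4)%Z == 1))%:R.

Lemma lcoef_quot_X_X4D1 (h : laurent) :
  ls_is_quot h 'X ('X^4 + 1) -> forall n, lcoef h n = quot_coef n.
Proof.
move=> h_quot; apply: (@recurrence_unique _ _ _ (fun n => (n == 1)%:R) 4 (Num.max (lbnd h) 0)) => //.
- by move=> i lt_i; apply: lbndP; lia.
- by move=> i lt_i; rewrite /quot_coef (_ : i < 0 = false) //; lia.
- move=> n; rewrite -(@lcoef_XnD1M 4) // h_quot lcoef_poly /pcoef coefX.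
  case: (lerP 0 n) => n0; first by congr _%:R; apply/eqP/eqP; lia.
  by have /negbTE -> : n != 1 by lia.
move=> n; rewrite /quot_coef; case: (ltrP n 0) => [n_lt0|n_ge0].
  have -> : (n - 4%:Z < 0) = true by lia.
  have -> : ((n - 4%:Z) %% 4 = n %% 4)%Z by lia.
  by rewrite F2_addrr; have /negbTE -> : n != 1 by lia.
case: (ltrP (n - 4%:Z) 0) => /= n4; first by rewrite add0r; congr _%:R; apply/eqP/eqP; lia.
by rewrite addr0; have /negbTE -> : n != 1 by lia.
Qed.

Definition sol_coef (p : int -> 'F_2) :=
  (forall i, 0 <= i -> p i = 0) /\
  (forall i, p i = (if (i %% 4)%Z == 0 then p (i %/ 4)%Z else 0) + quot_coef i).

Lemma solves_eq_rec (f h : laurent) :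
  ls_is_quot h 'X ('X^4 + 1) ->
  ls_eq (ls_add (ls_add (ls_pow4 f) f) h) ls_zero ->
  forall i, lcoef f i = (if (i %% 4)%Z == 0 then lcoef f (i %/ 4)%Z else 0) + quot_coef i.
Proof.
move=> h_quot f_eq i; have := f_eq i; rewrite !lcoef_add.
rewrite (lcoef_quot_X_X4D1 h_quot) lcoef_poly /pcoef coef0 if_same.
rewrite {1}(divz_eq i 4) mulrC lcoef_pow4 ?modz_ge0 ?ltz_pmod //.
by rewrite addrAC => /eqP; rewrite addr_eq0 F2_oppr => /eqP <-.
Qed.

(** * Truncations of f as 4^n-periodic series *)

Definition pow4 (n : nat) : int := (4 ^ n)%N%:Z.

Lemma pow4S n : pow4 n.+1 = 4 * pow4 n.
Proof. by rewrite /pow4 expnS; lia. Qed.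

Lemma pow4_gt0 n : 0 < pow4 n.
Proof. by rewrite /pow4; have := expn_gt0 4 n; lia. Qed.

(* The 4^n-periodic extension of the block of p on [-4^n, 0). *)
Definition trunc_coef (p : int -> 'F_2) (n : nat) (i : int) : 'F_2 :=
  if i < 0 then p ((i %% pow4 n)%Z - pow4 n) else 0.

Lemma trunc_coef_bnd p n i : 0 < i -> trunc_coef p n i = 0.
Proof. by move=> /ltW i_ge0; rewrite /trunc_coef ltNge i_ge0. Qed.

Definition trunc p n : laurent := Laurent (@trunc_coef_bnd p n).

Definition trunc_num (p : int -> 'F_2) (n : nat) : {poly 'F_2} :=
  \poly_(j < 4 ^ n) p (j%:Z - pow4 n).

Lemma trunc_quot p n : ls_is_quot (trunc p n) (trunc_num p n) (XnD1 (4 ^ n)).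
Proof.
have N_gt0 := pow4_gt0 n; move=> i.
rewrite lcoef_XnD1M ?expn_gt0 // lcoef_poly /pcoef /= /trunc_coef -/(pow4 n).
have modB : ((i - pow4 n) %% pow4 n)%Z = (i %% pow4 n)%Z.
  by rewrite (_ : i - pow4 n = (-1) * pow4 n + i) ?modzMDl //; ring.
case: (ltrP i 0) => [i_lt0|i_ge0].
  have -> : (i - pow4 n < 0) = true by lia.
  by rewrite modB F2_addrr.
rewrite coef_poly; case: (ltrP (i - pow4 n) 0) => [i_lt|i_ge].
  have -> : (absz i < 4 ^ n)%N = true by rewrite /pow4 in i_lt; lia.
  rewrite add0r modB modz_small; last by lia.
  by congr p; lia.
have -> : (absz i < 4 ^ n)%N = false by rewrite /pow4 in i_ge; lia.
by rewrite addr0.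
Qed.

Lemma sum_nat_4blocks (V : nmodType) (G : nat -> V) M :
  \sum_(0 <= j < 4 * M) G j =
  \sum_(0 <= j < M) (G (4 * j)%N + G (4 * j + 1)%N + G (4 * j + 2)%N + G (4 * j + 3)%N).
Proof.
elim: M => [|M IH]; first by rewrite muln0 !big_geq.
rewrite (_ : 4 * M.+1 = (4 * M).+3.+1)%N; last by lia.
rewrite !big_nat_recr //= IH -!addrA; congr (_ + _).
by congr (G _ + (G _ + (G _ + G _))); lia.
Qed.

Section SolutionCoefficients.

Variable p : int -> 'F_2.
Hypothesis p_sol : sol_coef p.

Lemma sol_coef_mul4 i : i < 0 -> p (4 * i) = p i.
Proof.
move=> i_lt0; rewrite p_sol.2 /quot_coef (_ : (4 * i) %% 4 = 0)%Z; last by lia.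
by rewrite (_ : (4 * i) %/ 4 = i)%Z ?eqxx ?andbF ?addr0 //; lia.
Qed.

Lemma sol_coef_mod i : i < 0 -> (i %% 4)%Z != 0 -> p i = ((i %% 4)%Z == 1)%:R.
Proof. by move=> i_lt0 i_mod; rewrite p_sol.2 (negbTE i_mod) add0r /quot_coef i_lt0. Qed.

Lemma sol_coef_m3pow4 n : p (- (3 * pow4 n)) = 1.
Proof.
elim: n => [|n IH]; first by rewrite sol_coef_mod.
have := pow4_gt0 n; rewrite pow4S => N_gt0.
by rewrite (_ : - (3 * (4 * pow4 n)) = 4 * - (3 * pow4 n)) ?sol_coef_mul4 //; lia.
Qed.

Lemma sol_coef_mpow4 n : p (- pow4 n) = 0.
Proof.
elim: n => [|n IH]; first by rewrite sol_coef_mod.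
have := pow4_gt0 n; rewrite pow4S => N_gt0.
by rewrite (_ : - (4 * pow4 n) = 4 * - pow4 n) ?sol_coef_mul4 //; lia.
Qed.

Lemma sol_coef_periodic n i : - (3 * pow4 n) < i < - pow4 n -> p i = p (i + pow4 n).
Proof.
elim: n i => [|n IH] i; first by rewrite /pow4 /= => i_range; rewrite (_ : i = -2) ?sol_coef_mod //; lia.
have N_gt0 := pow4_gt0 n; rewrite pow4S => i_range.
have [i_mod|i_mod] := eqVneq (i %% 4)%Z 0; last first.
  rewrite !sol_coef_mod //; try lia.
  by have -> : ((i + 4 * pow4 n) %% 4 = i %% 4)%Z by lia.
have -> : i = 4 * (i %/ 4)%Z by lia.
rewrite (_ : 4 * _ + _ = 4 * ((i %/ 4)%Z + pow4 n)); last by ring.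
by rewrite !sol_coef_mul4; try apply: IH; lia.
Qed.

Lemma sol_coef_trunc n i : - (3 * pow4 n) < i -> p i = trunc_coef p n i.
Proof.
move=> lt_i; have N_gt0 := pow4_gt0 n; rewrite /trunc_coef.
case: (ltrP i 0) => [i_lt0|i_ge0]; last exact: p_sol.1.
have := divz_eq i (pow4 n); have := ltz_pmod i N_gt0.
have := modz_ge0 i (lt0r_neq0 N_gt0).
move: (i %/ pow4 n)%Z (i %% pow4 n)%Z => q r r_ge0 r_lt iE.
have [q1|[q2|q3]] : q = -1 \/ q = -2 \/ q = -3 by nia.
- by congr p; lia.
- by rewrite (sol_coef_periodic (n := n)); [congr p|]; lia.
- rewrite (sol_coef_periodic (n := n)); last by lia.
  by rewrite (sol_coef_periodic (n := n)); [congr p|]; lia.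
Qed.

Lemma trunc_coef_m3pow4 n : trunc_coef p n (- (3 * pow4 n)) = 0.
Proof.
have N_gt0 := pow4_gt0 n; rewrite /trunc_coef (_ : - (3 * pow4 n) < 0); last by lia.
by rewrite (_ : - (3 * pow4 n) = (-3) * pow4 n) ?modzMl ?add0r ?sol_coef_mpow4 //; ring.
Qed.

Lemma trunc_num_sum n : (trunc_num p n).[1] = \sum_(0 <= j < 4 ^ n) p (j%:Z - pow4 n).
Proof. by rewrite horner_poly big_mkord; apply: eq_bigr => j _; rewrite expr1n mulr1. Qed.

(* Group the indices by their residue mod 4: residue 0 reproduces the previous block,
   residues 1, 2, 3 contribute 1, 0, 0. *)
Lemma trunc_num_at1S n : (trunc_num p n.+1).[1] = (trunc_num p n).[1] + (4 ^ n)%N%:R.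
Proof.
rewrite !trunc_num_sum expnS sum_nat_4blocks.
rewrite [RHS](_ : _ = \sum_(0 <= j < 4 ^ n) (p (j%:Z - pow4 n) + 1)); last first.
  by rewrite big_split /= sumr_const_nat subn0.
rewrite big_nat_cond [in RHS]big_nat_cond; apply: eq_bigr => j /andP[/andP[_ j_lt] _].
have := pow4_gt0 n; rewrite pow4S (_ : (4 * j)%N%:Z - 4 * pow4 n = 4 * (j%:Z - pow4 n)) => [N_gt0|]; last by lia.
have j_lt' : j%:Z < pow4 n by rewrite /pow4; lia.
rewrite sol_coef_mul4 1?[p ((4 * j + 1)%N%:Z - _)]sol_coef_mod ?[p ((4 * j + 2)%N%:Z - _)]sol_coef_mod
  ?[p ((4 * j + 3)%N%:Z - _)]sol_coef_mod; try lia.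
rewrite (_ : (_ %% 4)%Z = 1); last by lia.
rewrite (_ : (_ %% 4)%Z = 2); last by lia.
by rewrite (_ : (_ %% 4)%Z = 3) ?addr0 //; lia.
Qed.

Lemma trunc_num_at1 n : (0 < n)%N -> (trunc_num p n).[1] = 1.
Proof.
case: n => // n _; elim: n => [|n IH].
  by rewrite trunc_num_at1S trunc_num_sum big_nat1 sol_coef_mod /pow4 //= add0r.
rewrite trunc_num_at1S IH expnS (_ : 4 * 4 ^ n = 2 * 4 ^ n + 2 * 4 ^ n)%N; last by lia.
by rewrite natrD F2_addrr addr0.
Qed.

End SolutionCoefficients.

Section AbsoluteValue.

Variables (R : realType) (c : R).
Hypothesis c_gt1 : 1 < c.

Let c_gt0 : 0 < c. Proof. exact: lt_trans ltr01 c_gt1. Qed.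

Lemma expz_powR (i : int) : c ^ i = c `^ i%:~R.
Proof. by rewrite powR_intmul // ltW. Qed.

Lemma ltr_powR2l (x y : R) : (c `^ x < c `^ y) = (x < y).
Proof. by rewrite /powR gt_eqF // ltr_expR ltr_pM2r // ln_gt0. Qed.

Lemma powR_expz (k : int) (t : R) : powR (c ^ k) t = c `^ (k%:~R * t).
Proof. by rewrite expz_powR powRrM. Qed.

Lemma ls_abs_ge (g : laurent) v : lcoef g v != 0 -> c ^ v <= ls_abs c g.
Proof.
move=> gv_neq0; apply: ub_le_sup; last by exists v.
exists (c ^ lbnd g) => _ [i gi_neq0 <-]; rewrite ler_eXz2l // leNgt.
by apply: contra gi_neq0 => /lbndP ->.
Qed.

Lemma ls_abs_le (g : laurent) v : (forall i, lcoef g i != 0 -> i <= v) -> ls_abs c g <= c ^ v.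
Proof.
move=> g_le; rewrite /ls_abs; set E := (X in sup X).
have [[x Ex]|E0] := pselect (E !=set0)%classic.
  by apply: ge_sup; [exists x | move=> _ [i gi <-]; rewrite ler_eXz2l // g_le].
have -> : E = set0 by apply/seteqP; split=> // y Ey; apply: E0; exists y.
by rewrite sup0 exprz_ge0 // ltW.
Qed.

Lemma ls_abs_lt1_lcoef (g : laurent) i : ls_abs c g < 1 -> 0 <= i -> lcoef g i = 0.
Proof.
move=> g_lt1 i_ge0; apply/eqP; apply: contraTT g_lt1 => gi_neq0; rewrite -leNgt.
by apply: le_trans (ls_abs_ge gi_neq0); rewrite -(expr0z c) ler_eXz2l.
Qed.

Lemma ls_abs_poly (Q : {poly 'F_2}) : Q != 0 -> ls_abs c (ls_of_poly Q) = c ^ ((size Q)%:Z - 1).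
Proof.
move=> Q_neq0; apply/eqP; rewrite eq_le; apply/andP; split.
  apply: ls_abs_le => i; rewrite lcoef_poly; apply: contraR; rewrite -ltNge => lt_i.
  by rewrite pcoef_size //; lia.
have Q_gt0 : (0 < size Q)%N by rewrite size_poly_gt0.
rewrite (_ : _ - 1 = (size Q).-1%:Z); last by lia.
by apply: ls_abs_ge; rewrite lcoef_poly pcoef_nat -lead_coefE lead_coef_eq0.
Qed.

End AbsoluteValue.

Lemma sol_coef_of_solves (R : realType) (c : R) (f : laurent) :
  1 < c -> ls_abs c f < 1 -> solves_eq f -> sol_coef (lcoef f).
Proof.
move=> c_gt1 f_lt1 [h [h_quot f_eq]]; split; last exact: solves_eq_rec h_quot f_eq.
by move=> i i_ge0; apply: (ls_abs_lt1_lcoef c_gt1 f_lt1).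
Qed.

(** * Rational approximations and their denominators *)

Lemma pcoefM (p r : {poly 'F_2}) i :
  pcoef (p * r) i = zsum 0 (size p) (fun j => pcoef p j * pcoef r (i - j)).
Proof.
case: (ltrP i 0) => [i_lt0|i_ge0].
  by rewrite pcoef_neg // zsum1 // => j j_ge0 _; rewrite (@pcoef_neg r) ?mulr0 //; lia.
have -> : i = (absz i)%:Z by lia.
set k := absz i; set F := fun j => pcoef p j * pcoef r (k%:Z - j).
rewrite pcoef_nat coefM.
have wideE : zsum 0 (k.+1 + size p) F = zsum 0 k.+1 F.
  apply: zsum_widen; try lia; move=> j [j_lt0|j_gt]; first by rewrite /F pcoef_neg ?mul0r.
  by rewrite /F (@pcoef_neg r) ?mulr0 //; lia.
have wideE' : zsum 0 (k.+1 + size p) F = zsum 0 (size p) F.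
  apply: zsum_widen; try lia; move=> j [j_lt0|j_gt]; first by rewrite /F pcoef_neg ?mul0r.
  by rewrite /F pcoef_size ?mul0r.
rewrite -wideE' wideE.
apply: eq_bigr => j _; have := ltn_ord j; rewrite /F add0r pcoef_nat => j_le.
by rewrite (_ : k%:Z - j%:Z = (k - j)%N%:Z) //; lia.
Qed.

Lemma ls_quot_ext (g g' : laurent) P Q : (forall i, lcoef g i = lcoef g' i) ->
  ls_is_quot g P Q -> ls_is_quot g' P Q.
Proof. by move=> gg' g_quot i; rewrite -(g_quot i) !lcoef_polyM; apply: eq_zsum => j _ _; rewrite gg'. Qed.

Lemma ls_quot_XnD1_eq (P Q P' : {poly 'F_2}) (N : nat) (g : laurent) : (0 < N)%N ->
  ls_is_quot g P Q -> ls_is_quot g P' (XnD1 N) -> Q * P' = XnD1 N * P.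
Proof.
move=> N_gt0 g_quot g_quot'; apply/polyP => k; rewrite -!pcoef_nat !pcoefM zsum_XnD1 //.
rewrite (@eq_zsum _ _ _ (fun j => pcoef Q j * lcoef g (k%:Z - j) + pcoef Q j * lcoef g (k%:Z - N%:Z - j))).
  by rewrite zsumD -!lcoef_polyM !g_quot.
move=> j _ _; rewrite -mulrDr -[pcoef P' _]lcoef_poly -g_quot' lcoef_XnD1M //.
by congr (_ * (_ + lcoef g _)); ring.
Qed.

Lemma X1_pow4 (n : nat) : ('X + 1) ^+ (4 ^ n) = XnD1 (4 ^ n).
Proof.
rewrite exprDn_pchar ?expr1n // -[4%N]/(2 ^ 2)%N -expnM pnatX.
by rewrite pnatE // pchar_poly pchar_F2.
Qed.

(* T^(4^n) + 1 = (T + 1)^(4^n) is coprime to P' since P'(1) != 0, so it divides Q. *)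
Lemma pow4_lt_size_den (P Q P' : {poly 'F_2}) (n : nat) :
  Q != 0 -> P'.[1] != 0 -> Q * P' = XnD1 (4 ^ n) * P -> (4 ^ n < size Q)%N.
Proof.
move=> Q_neq0 P'1 QP'E.
have coprime_X1 : coprimep (('X + 1) ^+ (4 ^ n)) P'.
  apply: coprimep_expl; rewrite coprimep_sym (_ : 'X + 1 = 'X - 1%:P).
    by rewrite coprimep_XsubC rootE.
  by rewrite -polyCN F2_oppr polyC1.
have : ('X + 1) ^+ (4 ^ n) %| Q by rewrite -(Gauss_dvdpl _ coprime_X1) QP'E X1_pow4 dvdp_mulIl.
by move/(dvdp_leq Q_neq0); rewrite X1_pow4 size_XnD1 ?expn_gt0.
Qed.

Lemma ls_top_coef (d : laurent) : (exists i, lcoef d i != 0) ->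
  exists v, lcoef d v != 0 /\ forall k, v < k -> lcoef d k = 0.
Proof.
move=> [i di_neq0].
have ex_k : exists k : nat, lcoef d (lbnd d - k%:Z) != 0.
  exists (absz (lbnd d - i)); case: (lerP i (lbnd d)) => i_bnd.
    by rewrite (_ : _ - _ = i) //; lia.
  by rewrite lbndP in di_neq0.
case: (ex_minnP ex_k) => k0 dk0 k0_min; exists (lbnd d - k0%:Z); split=> // k lt_k.
case: (lerP k (lbnd d)) => k_bnd; last by rewrite lbndP.
apply/eqP; apply: contraT => dk_neq0.
have := k0_min (absz (lbnd d - k)); rewrite (_ : _ - _ = k); last by lia.
by move=> /(_ dk_neq0); lia.
Qed.

Lemma zsum_top_mul (p : {poly 'F_2}) (e : int -> 'F_2) w : p != 0 -> e w != 0 ->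
  (forall k, w < k -> e k = 0) ->
  zsum 0 (size p) (fun j => pcoef p j * e ((size p)%:Z - 1 + w - j)) != 0.
Proof.
move=> p_neq0 ew_neq0 e_top; have p_gt0 : (0 < size p)%N by rewrite size_poly_gt0.
rewrite (@zsum_widen ((size p)%:Z - 1) 1) ?/zsum ?big_ord1 ?addr0; try lia; last first.
  move=> j [j_lt|j_ge]; first by rewrite e_top ?mulr0 //; lia.
  by rewrite pcoef_size ?mul0r //; lia.
rewrite (_ : _ - 1 = (size p).-1%:Z) ?pcoef_nat; last by lia.
rewrite (_ : _ + w - _ = w); last by ring.
by rewrite (F2_neq0 (_ : p`_(size p).-1 != 0)) ?mul1r // -lead_coefE lead_coef_eq0.
Qed.

(* Q (T^N + 1) (g - g') is a polynomial, so its top term cannot have negative degree. *)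
Lemma quot_sub_top_ge (P Q P' : {poly 'F_2}) (N : nat) (g g' : laurent) v :
  (0 < N)%N -> Q != 0 -> ls_is_quot g P Q -> ls_is_quot g' P' (XnD1 N) ->
  lcoef g v != lcoef g' v -> (forall k, v < k -> lcoef g k = lcoef g' k) ->
  0 <= (size Q)%:Z - 1 + (N%:Z + v).
Proof.
move=> N_gt0 Q_neq0 g_quot g'_quot gv_neq g_top; rewrite leNgt; apply/negP => i_lt0.
set d := fun k => lcoef g k + lcoef g' k; set e := fun k => d k + d (k - N%:Z).
have d_top k : v < k -> d k = 0 by move/g_top; rewrite /d => ->; apply: F2_addrr.
have e_top : e (N%:Z + v) != 0.
  rewrite /e d_top; last by lia.
  rewrite add0r (_ : N%:Z + v - N%:Z = v); last by ring.
  by apply: contra gv_neq; rewrite /d addr_eq0 F2_oppr.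
have e_above k : N%:Z + v < k -> e k = 0.
  by move=> lt_k; rewrite /e !d_top ?addr0 // -?ltrBrDl; lia.
have := zsum_top_mul Q_neq0 e_top e_above; set i := _ + (_ + v).
have gE : zsum 0 (size Q) (fun j => pcoef Q j * (lcoef g (i - j) + lcoef g (i - N%:Z - j))) = 0.
  rewrite (@eq_zsum _ _ _ (fun j => pcoef Q j * lcoef g (i - j) + pcoef Q j * lcoef g (i - N%:Z - j))).
    by rewrite zsumD -!lcoef_polyM !g_quot !lcoef_poly !pcoef_neg ?addr0 // /i; lia.
  by move=> j _ _; rewrite mulrDr.
have g'E : zsum 0 (size Q) (fun j => pcoef Q j * (lcoef g' (i - j) + lcoef g' (i - j - N%:Z))) = 0.
  rewrite (@eq_zsum _ _ _ (fun j => pcoef Q j * pcoef P' (i - j))) -?pcoefM ?pcoef_neg //.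
  by move=> j _ _; rewrite -[pcoef P' _]lcoef_poly -g'_quot lcoef_XnD1M.
rewrite (@eq_zsum _ _ _ (fun j => pcoef Q j * (lcoef g (i - j) + lcoef g (i - N%:Z - j))
    + pcoef Q j * (lcoef g' (i - j) + lcoef g' (i - j - N%:Z)))) ?zsumD ?gE ?g'E ?addr0 ?eqxx //.
move=> j _ _; rewrite -mulrDr /e /d addrACA; congr (_ * (_ + lcoef g _ + _)); ring.
Qed.

Lemma trunc_quot_den_gt (p : int -> 'F_2) (n : nat) (P Q : {poly 'F_2}) :
  sol_coef p -> (0 < n)%N -> Q != 0 -> ls_is_quot (trunc p n) P Q -> (4 ^ n < size Q)%N.
Proof.
move=> p_sol n_gt0 Q_neq0 P_quot; apply: (pow4_lt_size_den Q_neq0 (P' := trunc_num p n) (P := P)).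
  by rewrite trunc_num_at1 ?oner_eq0.
exact: ls_quot_XnD1_eq (expn_gt0 4 n) P_quot (trunc_quot p n).
Qed.

Lemma exists_pow4_bracket (q : nat) : (2 <= q)%N ->
  exists n, [/\ (0 < n)%N, (q < 2 * 4 ^ n)%N & (4 ^ n <= 2 * q)%N].
Proof.
move=> q_ge2; have ex_n : exists n, (q < 2 * 4 ^ n)%N.
  by exists q; have := ltn_expl q (isT : (1 < 4)%N); lia.
case: (ex_minnP ex_n) => [[|n]] q_lt n_min; first by rewrite expn0 in q_lt; lia.
exists n.+1; split=> //; case: (ltnP q (2 * 4 ^ n)) => [/n_min|]; rewrite expnS; lia.
Qed.

Section IrrationalityExponent.

Variables (R : realType) (c : R) (f : laurent).
Hypotheses (c_gt1 : 1 < c) (f_sol : sol_coef (lcoef f)).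

Lemma ls_abs_sub_trunc n : ls_abs c (ls_sub f (trunc (lcoef f) n)) <= c ^ (- (3 * pow4 n)).
Proof.
apply: ls_abs_le => // i; apply: contraR; rewrite -ltNge => lt_i.
by rewrite /= -(sol_coef_trunc f_sol lt_i) subrr.
Qed.

Lemma approx_set_infinite t : t < 3 -> infinite_set (approx_set c f t).
Proof.
move=> t_lt3; set u := fun n => (trunc_num (lcoef f) n, XnD1 (4 ^ n)).
have u_approx n : approx_set c f t (u n).
  have N_gt0 := expn_gt0 4 n; split; first exact: XnD1_neq0.
  exists (trunc (lcoef f) n); split; first exact: trunc_quot.
  rewrite /= ls_abs_poly ?XnD1_neq0 // size_XnD1 // powR_expz //.
  apply: le_lt_trans (ls_abs_sub_trunc n) _; rewrite expz_powR // ltr_powR2l //.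
  have : (0 : R) < (pow4 n)%:~R by rewrite ltr0z pow4_gt0.
  by rewrite (_ : _ - 1 = pow4 n) ?intrN ?intrM; [nra | rewrite /pow4; lia].
have u_inj : {in (u @^-1` approx_set c f t)%classic &, injective u}.
  move=> n m _ _ [_ /(congr1 (fun p : {poly 'F_2} => size p))].
  by rewrite !size_XnD1 ?expn_gt0 // => -[]; apply: expnI.
move/(finite_preimage u_inj); rewrite (_ : (_ @^-1` _)%classic = setT); first exact: infinite_nat.
by apply/seteqP; split=> // n _; exact: u_approx.
Qed.

Lemma approx_size_den_le2 t P Q g : 3 < t -> Q != 0 -> ls_is_quot g P Q ->
  ls_abs c (ls_sub f g) < powR (ls_abs c (ls_of_poly Q)) (- t) -> (size Q <= 2)%N.
Proof.
move=> t_gt3 Q_neq0 g_quot; rewrite ls_abs_poly // powR_expz // => g_close.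
rewrite leqNgt; apply/negP => Q_gt2; set q := (size Q)%:Z - 1 in g_close.
have [n [n_gt0 q_lt q_ge]] := @exists_pow4_bracket (size Q).-1 ltac:(lia).
have q_ge2 : (2 : R) <= q%:~R by rewrite (_ : 2 = 2%:~R) // ler_int /q; lia.
have close_at v : lcoef (ls_sub f g) v != 0 -> (v%:~R : R) < q%:~R * - t.
  move=> fgv; rewrite -(ltr_powR2l c_gt1) -expz_powR //.
  exact: le_lt_trans (ls_abs_ge c_gt1 fgv) g_close.
have [g_trunc|/existsNP[i gi]] := pselect (forall i, lcoef g i = trunc_coef (lcoef f) n i).
  have N_le_q : ((pow4 n)%:~R : R) <= q%:~R.
    have := trunc_quot_den_gt f_sol n_gt0 Q_neq0 (ls_quot_ext (g' := trunc (lcoef f) n) g_trunc g_quot).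
    by rewrite ler_int /q /pow4; lia.
  have := close_at (- (3 * pow4 n)); rewrite /= g_trunc trunc_coef_m3pow4 //.
  by rewrite sol_coef_m3pow4 // subr0 oner_eq0 intrN intrM => /(_ isT); nra.
have [v []] : exists v, lcoef (ls_sub g (trunc (lcoef f) n)) v != 0 /\
    forall k, v < k -> lcoef (ls_sub g (trunc (lcoef f) n)) k = 0.
  by apply: ls_top_coef; exists i; rewrite /= subr_eq0; apply/eqP.
rewrite /= subr_eq0 => gv_neq g_top.
have v_ge := quot_sub_top_ge (expn_gt0 4 n) Q_neq0 g_quot (trunc_quot _ n) gv_neq
  (fun k lt_k => subr0_eq (g_top k lt_k)).
have fv : lcoef f v = trunc_coef (lcoef f) n v by apply: (sol_coef_trunc f_sol); rewrite /pow4; lia.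
have := close_at v; rewrite /= fv subr_eq0 eq_sym gv_neq => /(_ isT).
have : ((pow4 n)%:~R : R) <= 2 * q%:~R by rewrite (_ : 2 = 2%:~R) // -intrM ler_int /q /pow4; lia.
have : (- (q + pow4 n))%:~R <= (v%:~R : R) by rewrite ler_int /pow4 -/q; lia.
by rewrite intrN intrD; nra.
Qed.

Lemma approx_size_num_le t P Q g : 0 < t -> Q != 0 -> ls_is_quot g P Q ->
  ls_abs c (ls_sub f g) < powR (ls_abs c (ls_of_poly Q)) (- t) -> (size P <= (size Q).-1)%N.
Proof.
move=> t_gt0 Q_neq0 g_quot; rewrite ls_abs_poly // powR_expz // => g_close.
have fg_lt1 : ls_abs c (ls_sub f g) < 1.
  apply: lt_le_trans g_close _; rewrite -[X in _ <= X](powRr0 c) ler_powR ?(ltW c_gt1) //.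
  rewrite mulrN oppr_le0; apply: mulr_ge0 (ltW t_gt0).
  by rewrite ler0z; move: Q_neq0; rewrite -size_poly_gt0; lia.
have g0 i : 0 <= i -> lcoef g i = 0.
  move=> i_ge0; have := ls_abs_lt1_lcoef c_gt1 fg_lt1 i_ge0.
  by rewrite /= f_sol.1 // sub0r => /eqP; rewrite oppr_eq0 => /eqP.
apply/leq_sizeP => k k_ge; rewrite -pcoef_nat -lcoef_poly -g_quot lcoef_polyM zsum1 // => j _ j_lt.
by rewrite g0 ?mulr0 //; lia.
Qed.

Lemma approx_set_finite t : 3 < t -> finite_set (approx_set c f t).
Proof.
move=> t_gt3; have t_gt0 : 0 < t by apply: lt_trans t_gt3.
apply: (@sub_finite_set _ _ ((fun ab : {poly_2 'F_2} * {poly_2 'F_2} => (val ab.1, val ab.2)) @` setT)%classic).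
  move=> [P Q] [/= Q_neq0 [g [g_quot g_close]]].
  have Q_le2 := approx_size_den_le2 t_gt3 Q_neq0 g_quot g_close.
  have P_le1 := approx_size_num_le t_gt0 Q_neq0 g_quot g_close.
  have P_le2 : (size P <= 2)%N by lia.
  by exists (NPoly (P_le2 : P \is a poly_of_size 2), NPoly (Q_le2 : Q \is a poly_of_size 2)).
by apply: finite_image; apply: finite_finset.
Qed.

End IrrationalityExponent.

Unset Implicit Arguments.

Theorem proposition5p2 (R : realType) (c : R) (f : laurent) :
  1 < c -> ls_abs c f < 1 -> solves_eq f ->
  irr_exponent c f = 3%:E.
Proof.
move=> c_gt1 f_lt1 f_eq; have f_sol := sol_coef_of_solves c_gt1 f_lt1 f_eq.
rewrite /irr_exponent; set S := (X in ereal_sup X).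
have S_le3 x : S x -> (x <= 3%:E)%E.
  move=> [tau tau_inf <-]; rewrite lee_fin leNgt; apply/negP => tau_gt3.
  exact: tau_inf (approx_set_finite c_gt1 f_sol tau_gt3).
have lt3_le_sup tau : tau < 3 -> (tau%:E <= ereal_sup S)%E.
  by move=> tau_lt3; apply: ereal_sup_ubound; exists tau => //; exact: approx_set_infinite.
apply/eqP; rewrite eq_le ge_ereal_sup //=.
case: (ereal_sup S) lt3_le_sup => [r| |] lt3_le_sup; last 2 first.
- by rewrite leey.
- by have := lt3_le_sup 0 ltac:(lra); rewrite leeNy_eq.
rewrite lee_fin leNgt; apply/negP => r_lt3.
by have := lt3_le_sup ((r + 3) / 2) ltac:(lra); rewrite lee_fin; lra.
Qed.
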